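(* For every positive integer $n$, the set $\{S_\alpha : \alpha \models n\}$ of shuffle functions is a basis of the vector space $\mathrm{QSym}_n$.
   Context: A composition $\alpha=(\alpha_1,\dots,\alpha_\ell)$ of $n$ (written $\alpha\models n$) is a finite sequence of positive integers summing to $n$; $\ell(\alpha)=\ell$ is its length. Set $\mathcal{I}(\alpha)=\{\alpha_1,\alpha_1+\alpha_2,\dots,\alpha_1+\cdots+\alpha_{\ell-1}\}\subseteq[n-1]$. For $\alpha,\beta\models n$ write $\beta\le\alpha$ if $\mathcal{I}(\beta)\subseteq\mathcal{I}(\alpha)$ (i.e. $\alpha$ refines $\beta$). The monomial quasisymmetric function is $M_\alpha=\sum_{i_1<\cdots<i_\ell}x_{i_1}^{\alpha_1}\cdots x_{i_\ell}^{\alpha_\ell}$ (in commuting variables $x_1,x_2,\dots$), and $\mathrm{QSym}_n$ is the $\mathbb{C}$-span of $\{M_\alpha:\alpha\models n\}$. For a composition $\alpha=(\alpha_1,\dots,\alpha_\ell)$ let $\mathrm{OtE}(\alpha)=\{i:\alpha_i\text{ odd},\ \alpha_{i+1}\text{ even}\}$. If $\mathrm{OtE}(\alpha)=\{i_1<\cdots<i_k\}$, the odd-min composition is $m_o(\alpha)=(\alpha_1+\cdots+\alpha_{i_1},\ \alpha_{i_1+1}+\cdots+\alpha_{i_2},\ \dots,\ \alpha_{i_k+1}+\cdots+\alpha_\ell)$. For $\beta=(\beta_1,\dots,\beta_p)$ with $m_o(\alpha)\le\beta\le\alpha$, each $\beta_i$ is the sum of a block of consecutive parts of $\alpha$; let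 $\mathrm{O}^\beta_\alpha(i)$ and $\mathrm{E}^\beta_\alpha(i)$ be the numbers of odd and even parts in that block, and set $c_\alpha^\beta=\prod_i \frac{1}{\mathrm{O}^\beta_\alpha(i)!\,\mathrm{E}^\beta_\alpha(i)!}$. The shuffle function is $S_\alpha=\sum_{m_o(\alpha)\le\beta\le\alpha} c_\alpha^\beta M_\beta$. *)

From HB Require Import structures.
From mathcomp Require Import all_boot all_order all_algebra.
From mathcomp Require Import reals.
From mathcomp Require Import complex.
Set Implicit Arguments. Unset Strict Implicit. Unset Printing Implicit Defensive.
Import Order.TTheory GRing.Theory Num.Theory.
Local Open Scope ring_scope.

Definition is_comp (n : nat) (a : seq nat) : bool :=
  all (fun x => 0 < x)%N a && (sumn a == n).

Fixpoint allseqs (n k : nat) : seq (seq nat) :=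
  if k is k'.+1 then [seq x :: s | x <- iota 0 n.+1, s <- allseqs n k'] else [:: [::]].

Definition comps (n : nat) : seq (seq nat) :=
  undup [seq a <- flatten [seq allseqs n k | k <- iota 0 n.+1] | is_comp n a].

Definition Iset (a : seq nat) : seq nat :=
  [seq sumn (take i a) | i <- iota 1 (size a).-1].

(** b <= a  iff  I(b) \subseteq I(a)  (a refines b) *)
Definition leC (b a : seq nat) : bool := all (fun x => x \in Iset a) (Iset b).

(** Odd-min composition m_o(a): cut a right after every part a_i with
    a_i odd and a_{i+1} even, and sum the parts in each block. *)
Fixpoint mo_aux (acc : nat) (a : seq nat) : seq nat :=
  match a with
  | [::] => [:: acc]
  | x :: rest =>
      match rest with
      | [::] => [:: acc + x]
      | y :: _ => if odd x && ~~ odd y then (acc + x) :: mo_aux 0 rest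
                  else mo_aux (acc + x) rest
      end
  end%N.
Definition mo (a : seq nat) : seq nat := if a is [::] then [::] else mo_aux 0 a.

(** For b <= a, the i-th block of consecutive parts of a summing to b_i. *)
Definition blocks (b a : seq nat) : seq (seq nat) :=
  [seq [seq nth 0%N a j | j <- iota 0 (size a) &
          ((sumn (take i b) <= sumn (take j a)) && (sumn (take j.+1 a) <= sumn (take i.+1 b)))%N]
   | i <- iota 0 (size b)].

Section QSym.
Variable R : realType.
Local Notation C := (R[i]).

Definition coefc (a b : seq nat) : C :=
  \prod_(B <- blocks b a) ((count odd B)`! * (count (fun x => ~~ odd x) B)`!)%:R^-1.

(** Formal power series in commuting variables x_1, x_2, ... are represented
    by their coefficient functions on monomials; a monomial
    x_1^{s_1} ... x_k^{s_k} is represented by its exponent sequence s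
    (trailing zeros being irrelevant for all series considered). *)
Definition series := seq nat -> C.

(** Monomial quasisymmetric function: the coefficient of x^s in M_a is 1 iff
    the nonzero exponents of s, read in increasing index order, form a. *)
Definition Mqs (a : seq nat) : series :=
  fun s => if [seq e <- s | (0 < e)%N] == a then 1 else 0.

Definition Sqs (a : seq nat) : series :=
  fun s => \sum_(b <- comps (sumn a) | leC (mo a) b && leC b a) coefc a b * Mqs b s.

Definition QSym (n : nat) (f : series) : Prop :=
  exists c : seq nat -> C, forall s, f s = \sum_(a <- comps n) c a * Mqs a s.
End QSym.

From HB Require Import structures.
From mathcomp Require Import all_boot all_order all_algebra.
From mathcomp Require Import reals complex.
From mathcomp Require Import zify.
Import Order.TTheory GRing.Theory Num.Theory.
Set Implicit Arguments. Unset Strict Implicit. Unset Printing Implicit Defensive.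
Local Open Scope ring_scope.

(* At the monomial x^b of a composition b, M_b' takes the value [b == b'], so
   the coordinates of S_a on {M_b} are the c_a^b.  They vanish unless a refines
   b, a proper coarsening of a has fewer parts, and c_a^a is nonzero: the
   transition matrix is triangular for the number of parts with nonzero
   diagonal, hence invertible. *)

Lemma Iset_cons x r :
  Iset (x :: r) = if r is [::] then [::] else x :: map (addn x) (Iset r).
Proof.
case: r => [|y r] //; rewrite /Iset /= addn0; congr (_ :: _).
by rewrite -[2%N]/(1 + 1)%N iotaDl -!map_comp; apply: eq_map.
Qed.

Lemma Iset_sorted a : all (fun x => 0 < x)%N a -> sorted ltn (0%N :: Iset a).
Proof.
elim: a => [|x [|y t] IH] // /andP[x_gt0 yt_gt0].
rewrite Iset_cons /= x_gt0 -[x in path _ x]addn0 path_map.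
by rewrite (eq_path (fun u v => ltn_add2l x u v)); apply: IH.
Qed.

Lemma Iset_inj a b : all (fun x => 0 < x)%N a -> all (fun x => 0 < x)%N b ->
  Iset a = Iset b -> sumn a = sumn b -> a = b.
Proof.
elim: a b => [|x r IH] [|y t] //=; [lia|lia|].
move=> /andP[x_gt0 r_gt0] /andP[y_gt0 t_gt0]; rewrite !Iset_cons.
case: r t IH r_gt0 t_gt0 => [|x' r] [|y' t] IH //=; first by rewrite !addn0 => _ _ _ ->.
move=> r_gt0 t_gt0 [-> /(inj_map (@addnI y)) Ir_t] /eqP.
by rewrite eqn_add2l => /eqP sum_rt; rewrite (IH (y' :: t) r_gt0 t_gt0 Ir_t sum_rt).
Qed.

Lemma mem_comps n a : a \in comps n -> all (fun x => 0 < x)%N a /\ sumn a = n.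
Proof.
by rewrite /comps mem_undup mem_filter /is_comp => /andP[/andP[-> /eqP ->]].
Qed.

Lemma comps_uniq n : uniq (comps n).
Proof. exact: undup_uniq. Qed.

Lemma leC_refl a : leC a a.
Proof. exact/allP. Qed.

Lemma leC_size_eq n a b : a \in comps n -> b \in comps n -> leC b a ->
  (size a <= size b)%N -> a = b.
Proof.
move=> /mem_comps[a_gt0 sum_a] /mem_comps[b_gt0 sum_b] /allP Ib_a le_ab.
have /path_sorted sorted_Ia := Iset_sorted a_gt0.
have /path_sorted sorted_Ib := Iset_sorted b_gt0.
have uniq_Ib : uniq (Iset b) by apply: sorted_uniq sorted_Ib; [exact: ltn_trans|exact: ltnn].
have le_I : (size (Iset a) <= size (Iset b))%N by rewrite !size_map !size_iota -!subn1 leq_sub2r.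
have [_ eq_I] := uniq_min_size uniq_Ib Ib_a le_I.
apply: Iset_inj; rewrite ?sum_a ?sum_b //.
by apply: (irr_sorted_eq ltn_trans ltnn) => // e; rewrite eq_I.
Qed.

Lemma leC_size_lt n a b : a \in comps n -> b \in comps n -> leC b a -> b != a ->
  (size b < size a)%N.
Proof.
move=> a_n b_n le_ba; apply: contraNT; rewrite -leqNgt => le_ab.
by rewrite (leC_size_eq a_n b_n le_ba le_ab).
Qed.

Lemma Iset_cons_sub x r : {subset Iset (x :: r) <= x :: map (addn x) (Iset r)}.
Proof. by rewrite Iset_cons; case: r => [|y r] e //; rewrite in_nil. Qed.

Lemma Iset_mo_aux acc a : {subset Iset (mo_aux acc a) <= map (addn acc) (Iset a)}.
Proof.
elim: a acc => [|x [|y t] IH] acc //.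
rewrite [Iset (x :: _)]Iset_cons map_cons -map_comp /=.
case: ifP => _ e.
- move/Iset_cons_sub; rewrite inE => /orP[/eqP->|]; first exact: mem_head.
  case/mapP=> f /IH/mapP[g Ig ->] ->.
  by rewrite inE; apply/orP; right; apply/mapP; exists g; rewrite //= add0n addnA.
- move/IH/mapP => [g Ig ->]; rewrite inE; apply/orP; right.
  by apply/mapP; exists g; rewrite //= addnA.
Qed.

Lemma leC_mo a : leC (mo a) a.
Proof.
case: a => [|x r] //; apply/allP => e /Iset_mo_aux.
by rewrite (eq_map add0n) map_id.
Qed.

Section Span.
Variables (F : pzRingType) (I : eqType) (X : Type) (idx : seq I).

Definition in_span (f : I -> X -> F) (g : X -> F) : Prop :=
  exists d : I -> F, forall x, g x = \sum_(a <- idx) d a * f a x.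

Lemma in_span_ext f g h : (forall x, g x = h x) -> in_span f g -> in_span f h.
Proof. by move=> gh [d gE]; exists d => x; rewrite -gh. Qed.

Lemma in_span_lin f k1 k2 g h : in_span f g -> in_span f h ->
  in_span f (fun x => k1 * g x + k2 * h x).
Proof.
move=> [d1 gE] [d2 hE]; exists (fun a => k1 * d1 a + k2 * d2 a) => x.
rewrite gE hE !mulr_sumr -big_split /=; apply: eq_bigr => a _.
by rewrite mulrDl !mulrA.
Qed.

Lemma in_span_gen f a : uniq idx -> a \in idx -> in_span f (f a).
Proof.
move=> idx_uniq a_idx; exists (fun b => (b == a)%:R) => x.
rewrite (bigD1_seq a) //= eqxx mul1r big1 ?addr0 // => b /negPf ->.
by rewrite mul0r.
Qed.

Lemma in_span_sum f (l : seq I) (c : I -> F) (g : I -> X -> F) :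
  (forall a, a \in l -> c a != 0 -> in_span f (g a)) ->
  in_span f (fun x => \sum_(a <- l) c a * g a x).
Proof.
elim: l => [|b l IH] gl.
  by exists (fun=> 0) => x; rewrite !big_nil big1 // => a _; rewrite mul0r.
have {IH} sum_l : in_span f (fun x => \sum_(a <- l) c a * g a x).
  by apply: IH => a al; apply: gl; rewrite inE al orbT.
have [cb0|cb0] := eqVneq (c b) 0.
  by apply: in_span_ext sum_l => x; rewrite big_cons cb0 mul0r add0r.
have := in_span_lin (c b) 1 (gl b (mem_head _ _) cb0) sum_l.
by apply: in_span_ext => x; rewrite big_cons mul1r.
Qed.

Lemma in_span_trans f f' g :
  {in idx, forall a, in_span f' (f a)} -> in_span f g -> in_span f' g.
Proof.
move=> ff' [d gE]; apply: in_span_ext (fun x => esym (gE x)) _.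
by apply: in_span_sum => a a_idx _; apply: ff'.
Qed.

End Span.

Section TriangularBasis.
Variables (F : fieldType) (I : eqType) (X : Type) (idx : seq I).
Variables (rank : I -> nat) (pt : I -> X) (T : I -> I -> F) (M S : I -> X -> F).
Hypothesis idx_uniq : uniq idx.
Hypothesis M_pt : {in idx &, forall a b, M b (pt a) = (a == b)%:R}.
Hypothesis S_expansion :
  {in idx, forall a x, S a x = \sum_(b <- idx) T a b * M b x}.
Hypothesis T_diag : {in idx, forall a, T a a != 0}.
Hypothesis T_triangular :
  {in idx &, forall a b, T a b != 0 -> b != a -> (rank b < rank a)%N}.

Lemma S_pt : {in idx &, forall a b, S a (pt b) = T a b}.
Proof.
move=> a b a_idx b_idx; rewrite S_expansion // (bigD1_seq b) //= M_pt // eqxx.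
rewrite mulr1 big1_seq ?addr0 // => b' /andP[b'b b'_idx].
by rewrite M_pt // eq_sym (negPf b'b) mulr0.
Qed.

Lemma triangular_free (c : I -> F) :
  (forall x, \sum_(a <- idx) c a * S a x = 0) -> {in idx, forall a, c a = 0}.
Proof.
move=> c0; pose N := (\max_(a <- idx) rank a)%N.
suff IH k : {in idx, forall a, (N - rank a)%N = k -> c a = 0}.
  by move=> a a_idx; apply: IH a_idx erefl.
elim/ltn_ind: k => k IH a a_idx ?; subst k.
have := c0 (pt a); rewrite (bigD1_seq a) //= S_pt // big1_seq ?addr0.
  by move/eqP; rewrite mulf_eq0 (negPf (T_diag a_idx)) orbF => /eqP.
move=> b /andP[ba b_idx]; rewrite S_pt //.
have [->|Tba] := eqVneq (T b a) 0; first by rewrite mulr0.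
have lt_ab := T_triangular b_idx a_idx Tba; rewrite eq_sym ba in lt_ab.
have le_bN : (rank b <= N)%N by apply: leq_bigmax_seq.
by rewrite (IH (N - rank b)%N) ?mul0r //; lia.
Qed.

Lemma M_in_span : {in idx, forall a, in_span idx S (M a)}.
Proof.
suff IH k : {in idx, forall a, (rank a < k)%N -> in_span idx S (M a)}.
  by move=> a a_idx; apply: (IH (rank a).+1).
elim: k => // k IH a a_idx lt_ak.
pose c b := if b != a then T a b else 0.
have S_split x : S a x = T a a * M a x + \sum_(b <- idx) c b * M b x.
  rewrite S_expansion // (bigD1_seq a) //= big_mkcond; congr (_ + _).
  by apply: eq_bigr => b _; rewrite /c; case: (b != a); rewrite ?mul0r.
have sum_in_span : in_span idx S (fun x => \sum_(b <- idx) c b * M b x).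
  apply: in_span_sum => b b_idx; rewrite /c; case: ifP => [ba Tab|]; last first.
    by rewrite eqxx.
  by apply: IH => //; apply: leq_trans (T_triangular a_idx b_idx Tab ba) _.
have := in_span_lin (T a a)^-1 (- (T a a)^-1) (in_span_gen S idx_uniq a_idx) sum_in_span.
apply: in_span_ext => x; rewrite S_split mulrDr mulrA mulVf ?T_diag // mul1r.
by rewrite mulNr addrK.
Qed.

End TriangularBasis.

Section ShuffleExpansion.
Variable R : realType.

Definition Scoef (a b : seq nat) : R[i] :=
  if leC (mo a) b && leC b a then coefc R a b else 0.

Lemma coefc_neq0 a b : coefc R a b != 0.
Proof.
rewrite prodf_seq_neq0; apply/allP => B _ /=.
by rewrite invr_eq0 pnatr_eq0 muln_eq0 negb_or -!lt0n !fact_gt0.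
Qed.

Lemma Scoef_diag a : Scoef a a != 0.
Proof. by rewrite /Scoef leC_mo leC_refl coefc_neq0. Qed.

Lemma Scoef_triangular n :
  {in comps n &, forall a b, Scoef a b != 0 -> b != a -> (size b < size a)%N}.
Proof.
move=> a b a_n b_n; rewrite /Scoef; case: ifP => [/andP[_ le_ba] _|]; last by rewrite eqxx.
exact: leC_size_lt a_n b_n le_ba.
Qed.

Lemma Mqs_comp n : {in comps n &, forall a b, Mqs R b a = (a == b)%:R}.
Proof.
move=> a b /mem_comps[/all_filterP a_gt0 _] _.
by rewrite /Mqs a_gt0; case: eqP.
Qed.

Lemma Sqs_expansion n :
  {in comps n, forall a s, Sqs R a s = \sum_(b <- comps n) Scoef a b * Mqs R b s}.
Proof.
move=> a /mem_comps[_ sum_a] s; rewrite /Sqs sum_a big_mkcond.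
by apply: eq_bigr => b _; rewrite /Scoef; case: ifP; rewrite ?mul0r.
Qed.

End ShuffleExpansion.

Theorem mainTheorem1 (R : realType) (n : nat) (hn : (0 < n)%N) :
  (forall a, a \in comps n -> QSym n (@Sqs R a)) /\
  (forall c : seq nat -> R[i],
      (forall s, \sum_(a <- comps n) c a * Sqs R a s = 0) ->
      forall a, a \in comps n -> c a = 0) /\
  (forall f : series R, QSym (R:=R) n f ->
      exists d : seq nat -> R[i], forall s, f s = \sum_(a <- comps n) d a * Sqs R a s).
Proof.
have S_diag : {in comps n, forall a, Scoef R a a != 0} by move=> a _; apply: Scoef_diag.
split; [|split].
- by move=> a a_n; exists (Scoef R a); apply: Sqs_expansion.
- move=> c; apply: (triangular_free (rank := size) (pt := id) (comps_uniq n)).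
  + exact: Mqs_comp.
  + exact: Sqs_expansion.
  + exact: S_diag.
  + exact: Scoef_triangular.
- move=> f; apply: in_span_trans => a a_n.
  apply: (M_in_span (rank := size) (comps_uniq n)) => //.
  + exact: Sqs_expansion.
  + exact: S_diag.
  + exact: Scoef_triangular.
Qed.
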